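(* Let $F$ be a field whose characteristic is not $2$, and let $k\geq 2$ be an integer. Then for every $x\in F$ there exist $a_1,\ldots,a_{2k}\in F$ such that $a_1+a_2+\cdots+a_{2k}=x=a_1a_2\cdots a_{2k}$. *)

From mathcomp Require Import all_boot all_order all_algebra.

(* Padding with m copies of each of 1 and -1 leaves the sum unchanged and multiplies the
   product by (-1)^m, so it suffices to find four terms with sum x and product e x, where
   e = (-1)^m.  For any c != 0 the quadruple (x/c, -e/c, c, -c) has product e x and sum
   (x - e)/c, so c = (x - e)/x works unless x is 0 or e.  For x = e one uses
   e (-3/2, 3/2, 4/3, -1/3), or (e, e, e, e) in characteristic 3. *)

From mathcomp Require Import all_boot all_order all_algebra.
From mathcomp Require Import ring.
Import GRing.Theory.

Set Implicit Arguments.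
Unset Strict Implicit.
Unset Printing Implicit Defensive.
Local Open Scope ring_scope.

Lemma two_neq0_of_pchar (F : fieldType) : ~~ (2%N \in [pchar F]) -> (2 : F) != 0.
Proof. by move=> hchar; rewrite natf_neq0_pchar pnatE. Qed.

Section SumEqProd.

Variable F : fieldType.
Implicit Types (x e : F) (m : nat).

Definition sign_pad m : seq F := nseq m 1 ++ nseq m (-1).

Lemma size_sign_pad m : size (sign_pad m) = (m + m)%N.
Proof. by rewrite size_cat !size_nseq. Qed.

Lemma sum_sign_pad m : \sum_(y <- sign_pad m) y = 0.
Proof. by rewrite big_cat /= !big_nseq !iter_addr_0 mulNrn addrN. Qed.

Lemma prod_sign_pad m : \prod_(y <- sign_pad m) y = (-1) ^+ m.
Proof. by rewrite big_cat /= !big_nseq !iter_mulr_1 expr1n mul1r. Qed.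

Lemma four_terms_generic x e : x != 0 -> x != e ->
  exists b0 b1 b2 b3 : F, b0 + b1 + b2 + b3 = x /\ b0 * b1 * b2 * b3 = e * x.
Proof.
move=> x_neq0 x_neq_e.
have xe_neq0 : x - e != 0 by rewrite subr_eq0.
pose c := (x - e) / x.
have c_neq0 : c != 0 by rewrite mulf_neq0 ?invr_eq0.
exists (x / c), (- e / c), c, (- c); split; last by field.
by rewrite /c; field; rewrite xe_neq0 x_neq0.
Qed.

Hypothesis two_neq0 : (2 : F) != 0.

Lemma four_terms_sign e : e ^+ 2 = 1 ->
  exists b0 b1 b2 b3 : F, b0 + b1 + b2 + b3 = e /\ b0 * b1 * b2 * b3 = e * e.
Proof.
move=> e2; have [three0|three_neq0] := eqVneq (3 : F) 0.
  exists e, e, e, e; split.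
    have -> : e + e + e + e = e + 3 * e by ring.
    by rewrite three0 mul0r addr0.
  have -> : e * e * e * e = e ^+ 2 * e ^+ 2 by ring.
  by rewrite e2 mul1r -expr2.
exists (e * (-3 / 2)), (e * (3 / 2)), (e * (4 / 3)), (e * (-1 / 3)); split.
  by field; rewrite two_neq0 three_neq0.
have -> : e * (-3 / 2) * (e * (3 / 2)) * (e * (4 / 3)) * (e * (-1 / 3)) = e ^+ 2 * e ^+ 2.
  by field; rewrite two_neq0 three_neq0.
by rewrite e2 mul1r -expr2.
Qed.

Lemma four_terms x e : e ^+ 2 = 1 ->
  exists b0 b1 b2 b3 : F, b0 + b1 + b2 + b3 = x /\ b0 * b1 * b2 * b3 = e * x.
Proof.
move=> e2; have [->|x_neq0] := eqVneq x 0.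
  by exists 0, 0, 0, 0; rewrite !mulr0 !addr0.
have [->|x_neq_e] := eqVneq x e; first exact: four_terms_sign.
exact: four_terms_generic.
Qed.

End SumEqProd.

Theorem theorem1p3 (F : fieldType) (k : nat) (hchar : ~~ (2%N \in [pchar F]))
  (hk : (2 <= k)%N) (x : F) :
  exists a : 'I_(2 * k) -> F,
    \sum_(i < 2 * k) a i = x /\ \prod_(i < 2 * k) a i = x.
Proof.
case: k hk => [|[|m]] // _.
have [b0 [b1 [b2 [b3 [sum_b prod_b]]]]] :=
  four_terms (two_neq0_of_pchar hchar) x (sqrr_sign F m).
pose s := [:: b0, b1, b2, b3 & sign_pad F m].
have size_s : size s = (2 * m.+2)%N by rewrite /= size_sign_pad mul2n -addnn !addnS.
rewrite -size_s; exists (nth 0 s).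
rewrite -!(big_mkord xpredT) -!(big_nth 0 xpredT (fun y => y)) !big_cons.
rewrite sum_sign_pad prod_sign_pad addr0 !addrA !mulrA sum_b prod_b.
by rewrite mulrAC -expr2 sqrr_sign mul1r.
Qed.
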